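(* Let $(G,g)$ be an eight-dimensional semi-Riemannian Lie group with a subgroup $K\cong\mathrm{SU}(2)\times\mathrm{SU}(2)$ generating a left-invariant conformal foliation $\mathcal F$ on $G$. Let $\mathfrak g=\mathfrak k\oplus\mathfrak m$ be the orthogonal decomposition of the Lie algebra of $G$ with $\mathfrak k=\mathfrak{su}(2)\times\mathfrak{su}(2)$, and let $\{A,B,C,R,S,T,X,Y\}$ be an orthonormal basis for $\mathfrak g$ such that $A,B,C$ span the first factor, $R,S,T$ the second, with $[A,B]=2C$, $[C,A]=2B$, $[B,C]=2A$, $[R,S]=2T$, $[T,R]=2S$, $[S,T]=2R$. In this setting the brackets have the form $[A,X]=-b_{11}B-c_{11}C$, $[A,Y]=-b_{21}B-c_{21}C$, $[B,X]=b_{11}A-c_{12}C$, $[B,Y]=b_{21}A-c_{22}C$, $[C,X]=c_{11}A+c_{12}B$, $[C,Y]=c_{21}A+c_{22}B$, $[R,X]=-s_{14}S-t_{14}T$, $[R,Y]=-s_{24}S-t_{24}T$, $[S,X]=s_{14}R-t_{15}T$, $[S,Y]=s_{24}R-t_{25}T$, $[T,X]=t_{14}R+t_{15}S$, $[T,Y]=t_{24}R+t_{25}S$ for real numbers $b_{ij},c_{ij},s_{ij},t_{ij}$. Then the foliation $\mathcal F$ is semi-Riemannian and minimal. It is totally geodesic if and only if $$0=(\varepsilon_B-\varepsilon_A)b_{11}=(\varepsilon_B-\varepsilon_A)b_{21}=(\varepsilon_C-\varepsilon_A)c_{11}=(\varepsilon_C-\varepsilon_A)c_{21}=(\varepsilon_C-\varepsilon_B)c_{12}=(\varepsilon_C-\varepsilon_B)c_{22},$$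 $$0=(\varepsilon_S-\varepsilon_R)s_{14}=(\varepsilon_S-\varepsilon_R)s_{24}=(\varepsilon_T-\varepsilon_R)t_{14}=(\varepsilon_T-\varepsilon_R)t_{24}=(\varepsilon_T-\varepsilon_S)t_{15}=(\varepsilon_T-\varepsilon_S)t_{25}.$$
   Context: A semi-Riemannian Lie group $(G,g)$ is a Lie group with a left-invariant non-degenerate metric $g$ of arbitrary signature; its Lie algebra is identified with the left-invariant vector fields. $K$ generates the left-invariant foliation $\mathcal F$ by left translates of $K$, with tangent distribution $\mathcal V$ spanned by $\mathfrak k$ and orthogonal complement $\mathcal H$ spanned by $\mathfrak m$; $\mathcal V,\mathcal H$ also denote orthogonal projections. Orthonormal means $g(E_i,E_j)=\varepsilon_{E_i}\delta_{ij}$, $\varepsilon_{E_i}=g(E_i,E_i)\in\{\pm1\}$. With $\nabla$ the Levi-Civita connection: $B^{\mathcal H}(E,F)=\tfrac12\mathcal V(\nabla_EF+\nabla_FE)$ ($E,F\in\mathcal H$), $B^{\mathcal V}(E,F)=\tfrac12\mathcal H(\nabla_EF+\nabla_FE)$ ($E,F\in\mathcal V$). $\mathcal F$ is conformal if $B^{\mathcal H}=g\otimes V$ for some vector field $V$ in $\mathcal V$, semi-Riemannian if $B^{\mathcal H}=0$, minimal if $\sum_k\varepsilon_{V_k}B^{\mathcal V}(V_k,V_k)=0$ for an orthonormal basis $\{V_k\}$ of $\mathcal V$, and totally geodesic if $B^{\mathcal V}=0$. *)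

(* The Lie algebra g of G is modelled as R^8 = 'rV[R]_8, the
   coordinates being taken in the orthonormal basis (A,B,C,R,S,T,X,Y),
   indices 0..7.  All objects are left-invariant, so the geometry reduces to
   the Lie algebra. *)
From HB Require Import structures.
From mathcomp Require Import all_boot all_order all_algebra.
Set Implicit Arguments. Unset Strict Implicit. Unset Printing Implicit Defensive.
Import Order.TTheory GRing.Theory Num.Theory.
Local Open Scope ring_scope.

Definition iA : 'I_8 := inord 0.
Definition iB : 'I_8 := inord 1.
Definition iC : 'I_8 := inord 2.
Definition iR : 'I_8 := inord 3.
Definition iS : 'I_8 := inord 4.
Definition iT : 'I_8 := inord 5.
Definition iX : 'I_8 := inord 6.
Definition iY : 'I_8 := inord 7.

Definition ebas {R : realFieldType} (i : 'I_8) : 'rV[R]_8 := delta_mx 0 i.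

Definition gmet {R : realFieldType} (eps : 'I_8 -> R) (u v : 'rV[R]_8) : R :=
  \sum_(i < 8) eps i * u 0 i * v 0 i.

Definition is_signature {R : realFieldType} (eps : 'I_8 -> R) : Prop :=
  forall i, eps i = 1 \/ eps i = -1.

(* orthogonal projections onto V = span(A,..,T) = k and H = span(X,Y) = m *)
Definition Vproj {R : realFieldType} (u : 'rV[R]_8) : 'rV[R]_8 :=
  \row_j (if (j < 6)%N then u 0 j else 0).
Definition Hproj {R : realFieldType} (u : 'rV[R]_8) : 'rV[R]_8 :=
  \row_j (if (j < 6)%N then 0 else u 0 j).

Definition lie_bracket {R : realFieldType}
    (br : 'rV[R]_8 -> 'rV[R]_8 -> 'rV[R]_8) : Prop :=
  (forall (a : R) u v w, br (a *: u + v) w = a *: br u w + br v w) /\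
  (forall u v, br u v = - br v u) /\
  (forall u v w, br u (br v w) + br v (br w u) + br w (br u v) = 0).

Definition su2su2_brackets {R : realFieldType}
    (br : 'rV[R]_8 -> 'rV[R]_8 -> 'rV[R]_8) : Prop :=
  (br (ebas iA) (ebas iB) = 2 *: ebas iC/\
      br (ebas iC) (ebas iA) = 2 *: ebas iB/\
      br (ebas iB) (ebas iC) = 2 *: ebas iA/\
      br (ebas iR) (ebas iS) = 2 *: ebas iT/\
      br (ebas iT) (ebas iR) = 2 *: ebas iS/\
      br (ebas iS) (ebas iT) = 2 *: ebas iR /\
      (forall i j : 'I_8, (i < 3)%N -> (3 <= j < 6)%N -> br (ebas i) (ebas j) = 0)).

Definition bracket_form {R : realFieldType}
    (br : 'rV[R]_8 -> 'rV[R]_8 -> 'rV[R]_8)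
    (b11 b21 c11 c21 c12 c22 s14 s24 t14 t24 t15 t25 : R) : Prop :=
  (br (ebas iA) (ebas iX) = - (b11 *: ebas iB) - c11 *: ebas iC/\
      br (ebas iA) (ebas iY) = - (b21 *: ebas iB) - c21 *: ebas iC/\
      br (ebas iB) (ebas iX) = b11 *: ebas iA - c12 *: ebas iC/\
      br (ebas iB) (ebas iY) = b21 *: ebas iA - c22 *: ebas iC/\
      br (ebas iC) (ebas iX) = c11 *: ebas iA + c12 *: ebas iB/\
      br (ebas iC) (ebas iY) = c21 *: ebas iA + c22 *: ebas iB /\
  (br (ebas iR) (ebas iX) = - (s14 *: ebas iS) - t14 *: ebas iT/\
      br (ebas iR) (ebas iY) = - (s24 *: ebas iS) - t24 *: ebas iT/\
      br (ebas iS) (ebas iX) = s14 *: ebas iR - t15 *: ebas iT/\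
      br (ebas iS) (ebas iY) = s24 *: ebas iR - t25 *: ebas iT/\
      br (ebas iT) (ebas iX) = t14 *: ebas iR + t15 *: ebas iS /\
      br (ebas iT) (ebas iY) = t24 *: ebas iR + t25 *: ebas iS)).

(* nabla is the Levi-Civita connection restricted to left-invariant fields:
   torsion free, and metric (g(Y,Z) is constant for left-invariant Y,Z) *)
Definition levi_civita {R : realFieldType} (eps : 'I_8 -> R)
    (br nabla : 'rV[R]_8 -> 'rV[R]_8 -> 'rV[R]_8) : Prop :=
  (forall u v, nabla u v - nabla v u = br u v) /\
  (forall u v w, gmet eps (nabla u v) w + gmet eps v (nabla u w) = 0).

Definition BH {R : realFieldType} (nabla : 'rV[R]_8 -> 'rV[R]_8 -> 'rV[R]_8)
    (u v : 'rV[R]_8) : 'rV[R]_8 := 2^-1 *: Vproj (nabla u v + nabla v u).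
Definition BV {R : realFieldType} (nabla : 'rV[R]_8 -> 'rV[R]_8 -> 'rV[R]_8)
    (u v : 'rV[R]_8) : 'rV[R]_8 := 2^-1 *: Hproj (nabla u v + nabla v u).

Definition conformal_fol {R : realFieldType} (eps : 'I_8 -> R)
    (nabla : 'rV[R]_8 -> 'rV[R]_8 -> 'rV[R]_8) : Prop :=
  exists V : 'rV[R]_8, Vproj V = V /\
    forall u v, Hproj u = u -> Hproj v = v -> BH nabla u v = gmet eps u v *: V.

Definition semi_riemannian_fol {R : realFieldType}
    (nabla : 'rV[R]_8 -> 'rV[R]_8 -> 'rV[R]_8) : Prop :=
  forall u v, Hproj u = u -> Hproj v = v -> BH nabla u v = 0.

Definition minimal_fol {R : realFieldType} (eps : 'I_8 -> R)
    (nabla : 'rV[R]_8 -> 'rV[R]_8 -> 'rV[R]_8) : Prop :=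
  \sum_(k < 8 | (k < 6)%N) eps k *: BV nabla (ebas k) (ebas k) = 0.

Definition totally_geodesic_fol {R : realFieldType}
    (nabla : 'rV[R]_8 -> 'rV[R]_8 -> 'rV[R]_8) : Prop :=
  forall u v, Vproj u = u -> Vproj v = v -> BV nabla u v = 0.

(* For left-invariant fields the Koszul formula reduces to
     g(nabla_u v + nabla_v u, w) = g([w,u],v) + g([w,v],u),
   so both second fundamental forms are read off from the symmetrised
   brackets of the basis vectors.  Since [k,m] lies in k and k is orthogonal to
   m, these vanish for u, v in m and w in k: B^H = 0.  For u, v in k and w = X
   or Y, ad_w acts on each su(2) factor by a matrix that is skew for the
   Euclidean inner product, so its g-symmetrisation has zero diagonal (hence
   B^V has zero trace) and off-diagonal entries (eps_B - eps_A) b, ...;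
   B^V vanishes exactly when all of these do. *)

From HB Require Import structures.
From mathcomp Require Import all_boot all_order all_algebra.
From mathcomp Require Import ring.
Set Implicit Arguments.
Unset Strict Implicit.
Unset Printing Implicit Defensive.
Import Order.TTheory GRing.Theory Num.Theory.
Local Open Scope ring_scope.

Lemma iA_val : nat_of_ord iA = 0%N. Proof. by rewrite /iA inordK. Qed.
Lemma iB_val : nat_of_ord iB = 1%N. Proof. by rewrite /iB inordK. Qed.
Lemma iC_val : nat_of_ord iC = 2%N. Proof. by rewrite /iC inordK. Qed.
Lemma iR_val : nat_of_ord iR = 3%N. Proof. by rewrite /iR inordK. Qed.
Lemma iS_val : nat_of_ord iS = 4%N. Proof. by rewrite /iS inordK. Qed.
Lemma iT_val : nat_of_ord iT = 5%N. Proof. by rewrite /iT inordK. Qed.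
Lemma iX_val : nat_of_ord iX = 6%N. Proof. by rewrite /iX inordK. Qed.
Lemma iY_val : nat_of_ord iY = 7%N. Proof. by rewrite /iY inordK. Qed.

Lemma ord8_cases (P : 'I_8 -> Prop) :
  P iA -> P iB -> P iC -> P iR -> P iS -> P iT -> P iX -> P iY -> forall j, P j.
Proof.
move=> pA pB pC pR pS pT pX pY j; rewrite -(inord_val j).
by case: j => [[|[|[|[|[|[|[|[|m]]]]]]]] Hm].
Qed.

Ltac coords :=
  rewrite ?mxE -?val_eqE /= ?iA_val ?iB_val ?iC_val ?iR_val ?iS_val ?iT_val
    ?iX_val ?iY_val /=.

Section Projections.
Variable R : realFieldType.
Implicit Types (u v : 'rV[R]_8).

Lemma Vproj_expand u :
  Vproj u = u 0 iA *: ebas iA + u 0 iB *: ebas iB + u 0 iC *: ebas iC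
          + u 0 iR *: ebas iR + u 0 iS *: ebas iS + u 0 iT *: ebas iT.
Proof. by apply/rowP; elim/ord8_cases; coords; ring. Qed.

Lemma Hproj_expand u : Hproj u = u 0 iX *: ebas iX + u 0 iY *: ebas iY.
Proof. by apply/rowP; elim/ord8_cases; coords; ring. Qed.

Lemma VprojP u : Vproj u = u <-> u 0 iX = 0 /\ u 0 iY = 0.
Proof.
split=> [<- | [uX uY]]; first by coords.
by apply/rowP; elim/ord8_cases; coords.
Qed.

Lemma Hproj_eq0 u : Hproj u = 0 <-> u 0 iX = 0 /\ u 0 iY = 0.
Proof.
split=> [/rowP Hu | [uX uY]].
  by have := Hu iX; have := Hu iY; coords.
by apply/rowP; elim/ord8_cases; coords.
Qed.

Lemma Vproj_ebas (k : 'I_8) : (k < 6)%N -> Vproj (ebas k : 'rV[R]_8) = ebas k.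
Proof. by move=> lt_k6; apply/VprojP; move: lt_k6; elim/ord8_cases: k; coords. Qed.

Lemma VprojD u v : Vproj (u + v) = Vproj u + Vproj v.
Proof. by apply/rowP => j; rewrite !mxE; case: ifP; rewrite ?addr0. Qed.

Lemma VprojZ a u : Vproj (a *: u) = a *: Vproj u.
Proof. by apply/rowP => j; rewrite !mxE; case: ifP; rewrite ?mulr0. Qed.

End Projections.

Section Metric.
Variables (R : realFieldType) (eps : 'I_8 -> R).
Implicit Types (u v w x y : 'rV[R]_8).

Lemma gmetC u v : gmet eps u v = gmet eps v u.
Proof. by apply: eq_bigr => i _; rewrite /= mulrAC. Qed.

Lemma gmetDl u v w : gmet eps (u + v) w = gmet eps u w + gmet eps v w.
Proof.
by rewrite /gmet -big_split; apply: eq_bigr => i _; rewrite !mxE mulrDr mulrDl.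
Qed.

Lemma gmetZl a u w : gmet eps (a *: u) w = a * gmet eps u w.
Proof. by rewrite /gmet mulr_sumr; apply: eq_bigr => i _; rewrite !mxE; ring. Qed.

Lemma gmetNl u w : gmet eps (- u) w = - gmet eps u w.
Proof. by rewrite -scaleN1r gmetZl mulN1r. Qed.

Lemma gmetBl u v w : gmet eps (u - v) w = gmet eps u w - gmet eps v w.
Proof. by rewrite gmetDl gmetNl. Qed.

Lemma gmet_ebasr u j : gmet eps u (ebas j) = eps j * u 0 j.
Proof.
rewrite /gmet (bigD1 j) //= big1 => [|i ne_ij]; rewrite mxE eqxx /=.
  by rewrite eqxx mulr1 addr0.
by case: eqP ne_ij => [->|_ _]; rewrite ?eqxx ?mulr0.
Qed.

Lemma gmet_ebasl u j : gmet eps (ebas j) u = eps j * u 0 j.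
Proof. by rewrite gmetC gmet_ebasr. Qed.

Lemma gmet_vert_horiz x y : Vproj x = x -> Hproj y = y -> gmet eps x y = 0.
Proof.
by move=> <- <-; apply: big1 => i _; rewrite !mxE; case: ifP; rewrite ?mulr0 ?mul0r.
Qed.

Hypothesis sig : is_signature eps.

Lemma eps_neq0 j : eps j != 0.
Proof. by case: (sig j) => ->; rewrite ?oppr_eq0 oner_eq0. Qed.

Lemma coord_gmet u j : u 0 j = eps j * gmet eps u (ebas j).
Proof. by rewrite gmet_ebasr mulrA; case: (sig j) => ->; rewrite ?mulrNN !mul1r. Qed.

End Metric.

Section LeviCivita.
Variables (R : realFieldType) (eps : 'I_8 -> R).
Variable br : 'rV[R]_8 -> 'rV[R]_8 -> 'rV[R]_8.
Implicit Types (u v w : 'rV[R]_8).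

Definition ad_sym w u v := gmet eps (br w u) v + gmet eps (br w v) u.

Variable nabla : 'rV[R]_8 -> 'rV[R]_8 -> 'rV[R]_8.
Hypotheses (sig : is_signature eps) (LC : levi_civita eps br nabla).

Lemma koszul_sym u v w : gmet eps (nabla u v + nabla v u) w = ad_sym w u v.
Proof.
have [torsion metric] := LC.
have br_nabla a b c :
    gmet eps (br a b) c = gmet eps (nabla a b) c - gmet eps (nabla b a) c.
  by rewrite -torsion gmetBl.
have nabla_skew a b c : gmet eps (nabla a b) c = - gmet eps (nabla a c) b.
  by apply/eqP; rewrite -addr_eq0 [X in _ + X]gmetC metric.
rewrite /ad_sym gmetDl !br_nabla.
by rewrite (nabla_skew w u v) (nabla_skew u w v) (nabla_skew v w u); ring.
Qed.

Lemma nabla_sym_coord u v j : (nabla u v + nabla v u) 0 j = eps j * ad_sym (ebas j) u v.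
Proof. by rewrite (coord_gmet sig) koszul_sym. Qed.

Lemma BV_eq0 u v :
  BV nabla u v = 0 <-> ad_sym (ebas iX) u v = 0 /\ ad_sym (ebas iY) u v = 0.
Proof.
have half_neq0 : (2 : R)^-1 != 0 by rewrite invr_eq0 pnatr_eq0.
rewrite /BV; split=> [/eqP | ].
  rewrite scaler_eq0 (negPf half_neq0) /= => /eqP /Hproj_eq0.
  rewrite !nabla_sym_coord => -[/eqP hX /eqP hY].
  move: hX hY; rewrite !mulf_eq0 !(negPf (eps_neq0 sig _)) /=.
  by move=> /eqP -> /eqP ->.
move=> [hX hY]; suff -> : Hproj (nabla u v + nabla v u) = 0 by rewrite scaler0.
by apply/Hproj_eq0; rewrite !nabla_sym_coord hX hY !mulr0.
Qed.

Lemma BH_eq0 u v : (forall j : 'I_8, (j < 6)%N -> ad_sym (ebas j) u v = 0) ->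
  BH nabla u v = 0.
Proof.
move=> ad_sym0; rewrite /BH.
suff -> : Vproj (nabla u v + nabla v u) = 0 by rewrite scaler0.
apply/rowP => j; rewrite mxE [RHS]mxE; case: ifP => // lt_j6.
by rewrite nabla_sym_coord ad_sym0 ?mulr0.
Qed.

End LeviCivita.

Section SymForm.
Variables (R : realFieldType) (eps : 'I_8 -> R).
Implicit Types (u v : 'rV[R]_8).

Definition ad_sym_k (b c c' s t t' : R) u v :=
    (eps iB - eps iA) * b * (u 0 iB * v 0 iA + u 0 iA * v 0 iB)
  + (eps iC - eps iA) * c * (u 0 iC * v 0 iA + u 0 iA * v 0 iC)
  + (eps iC - eps iB) * c' * (u 0 iC * v 0 iB + u 0 iB * v 0 iC)
  + (eps iS - eps iR) * s * (u 0 iS * v 0 iR + u 0 iR * v 0 iS)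
  + (eps iT - eps iR) * t * (u 0 iT * v 0 iR + u 0 iR * v 0 iT)
  + (eps iT - eps iS) * t' * (u 0 iT * v 0 iS + u 0 iS * v 0 iT).

Lemma ad_sym_k_diag (b c c' s t t' : R) (k : 'I_8) :
  ad_sym_k b c c' s t t' (ebas k) (ebas k) = 0.
Proof. by rewrite /ad_sym_k; elim/ord8_cases: k; coords; ring. Qed.

Lemma ad_sym_k_ebas (b c c' s t t' : R) :
  let q := ad_sym_k b c c' s t t' in
  q (ebas iA) (ebas iB) = (eps iB - eps iA) * b /\
  q (ebas iA) (ebas iC) = (eps iC - eps iA) * c /\
  q (ebas iB) (ebas iC) = (eps iC - eps iB) * c' /\
  q (ebas iR) (ebas iS) = (eps iS - eps iR) * s /\
  q (ebas iR) (ebas iT) = (eps iT - eps iR) * t /\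
  q (ebas iS) (ebas iT) = (eps iT - eps iS) * t'.
Proof. by rewrite /ad_sym_k; do !split; coords; ring. Qed.

Lemma ad_sym_k_eq0 (b c c' s t t' : R) :
  (forall u v, Vproj u = u -> Vproj v = v -> ad_sym_k b c c' s t t' u v = 0) <->
  (eps iB - eps iA) * b = 0 /\ (eps iC - eps iA) * c = 0 /\
  (eps iC - eps iB) * c' = 0 /\ (eps iS - eps iR) * s = 0 /\
  (eps iT - eps iR) * t = 0 /\ (eps iT - eps iS) * t' = 0.
Proof.
split=> [q0 | [hb [hc [hc' [hs [ht ht']]]]] u v _ _].
  have [<- [<- [<- [<- [<- <-]]]]] := ad_sym_k_ebas b c c' s t t'.
  by do !split; apply: q0; apply: Vproj_ebas; coords.
by rewrite /ad_sym_k hb hc hc' hs ht ht' !mul0r !addr0.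
Qed.

End SymForm.

Section Brackets.
Variables (R : realFieldType) (eps : 'I_8 -> R).
Variable br : 'rV[R]_8 -> 'rV[R]_8 -> 'rV[R]_8.
Hypothesis L : lie_bracket br.
Implicit Types (u v w Z : 'rV[R]_8).

Lemma br_anti u v : br u v = - br v u.
Proof. by case: L => _ []. Qed.

Lemma br0 w : br 0 w = 0.
Proof.
have := L.1 1 0 0 w; rewrite !scale1r addr0 => /esym/eqP.
by rewrite -subr_eq0 addrK => /eqP.
Qed.

Lemma brDr w u v : br w (u + v) = br w u + br w v.
Proof.
have := L.1 1 u v w; rewrite !scale1r => brDl.
by rewrite !(br_anti w) brDl opprD.
Qed.

Lemma brZr w a u : br w (a *: u) = a *: br w u.
Proof.
have := L.1 a u 0 w; rewrite br0 !addr0 => brZl.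
by rewrite !(br_anti w) brZl scalerN.
Qed.

Definition k_bracket_form Z (b c c' s t t' : R) :=
  br (ebas iA) Z = - (b *: ebas iB) - c *: ebas iC /\
  br (ebas iB) Z = b *: ebas iA - c' *: ebas iC /\
  br (ebas iC) Z = c *: ebas iA + c' *: ebas iB /\
  br (ebas iR) Z = - (s *: ebas iS) - t *: ebas iT /\
  br (ebas iS) Z = s *: ebas iR - t' *: ebas iT /\
  br (ebas iT) Z = t *: ebas iR + t' *: ebas iS.

Lemma bracket_form_XY b11 b21 c11 c21 c12 c22 s14 s24 t14 t24 t15 t25 :
  bracket_form br b11 b21 c11 c21 c12 c22 s14 s24 t14 t24 t15 t25 ->
  k_bracket_form (ebas iX) b11 c11 c12 s14 t14 t15 /\
  k_bracket_form (ebas iY) b21 c21 c22 s24 t24 t25.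
Proof.
by move=> [AX [AY [BX [BY [CX [CY [RX [RY [SX [SY [TX TY]]]]]]]]]]]; do !split.
Qed.

Lemma k_bracket_form_vert Z (b c c' s t t' : R) (j : 'I_8) :
  k_bracket_form Z b c c' s t t' -> (j < 6)%N -> Vproj (br (ebas j) Z) = br (ebas j) Z.
Proof.
move=> [AZ [BZ [CZ [RZ [SZ TZ]]]]] lt_j6; apply/VprojP; move: lt_j6.
elim/ord8_cases: j; coords => // _.
all: by rewrite ?AZ ?BZ ?CZ ?RZ ?SZ ?TZ; coords; split; ring.
Qed.

Lemma ad_sym_horiz (j : 'I_8) u v :
  Vproj (br (ebas j) (ebas iX)) = br (ebas j) (ebas iX) ->
  Vproj (br (ebas j) (ebas iY)) = br (ebas j) (ebas iY) ->
  Hproj u = u -> Hproj v = v -> ad_sym eps br (ebas j) u v = 0.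
Proof.
move=> vertX vertY Hu Hv.
have vert_br w : Hproj w = w -> Vproj (br (ebas j) w) = br (ebas j) w.
  by move=> <-; rewrite Hproj_expand !brDr !brZr VprojD !VprojZ vertX vertY.
by rewrite /ad_sym !gmet_vert_horiz ?addr0 ?vert_br.
Qed.

Lemma ad_sym_vert Z (b c c' s t t' : R) u v :
  k_bracket_form Z b c c' s t t' -> Vproj u = u -> Vproj v = v ->
  ad_sym eps br Z u v = ad_sym_k eps b c c' s t t' u v.
Proof.
move=> [AZ [BZ [CZ [RZ [SZ TZ]]]]] Hu Hv.
rewrite /ad_sym -[in br Z u]Hu -[in br Z v]Hv !Vproj_expand !brDr !brZr !(br_anti Z).
rewrite AZ BZ CZ RZ SZ TZ !(gmetDl, gmetNl, gmetBl, gmetZl, gmet_ebasl) /ad_sym_k.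
ring.
Qed.

End Brackets.

Section Foliation.
Variables (R : realFieldType) (eps : 'I_8 -> R).
Variables (br nabla : 'rV[R]_8 -> 'rV[R]_8 -> 'rV[R]_8).
Variables (b11 b21 c11 c21 c12 c22 s14 s24 t14 t24 t15 t25 : R).
Hypotheses (sig : is_signature eps) (L : lie_bracket br).
Hypothesis LC : levi_civita eps br nabla.
Hypothesis kX : k_bracket_form br (ebas iX) b11 c11 c12 s14 t14 t15.
Hypothesis kY : k_bracket_form br (ebas iY) b21 c21 c22 s24 t24 t25.

Lemma semi_riemannian : semi_riemannian_fol nabla.
Proof.
move=> u v Hu Hv; apply: (BH_eq0 sig LC) => j lt_j6.
have vertX := k_bracket_form_vert kX lt_j6; have vertY := k_bracket_form_vert kY lt_j6.
exact: (ad_sym_horiz eps L vertX vertY Hu Hv).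
Qed.

Lemma BV_vert_eq0 u v : Vproj u = u -> Vproj v = v ->
  BV nabla u v = 0 <->
  ad_sym_k eps b11 c11 c12 s14 t14 t15 u v = 0 /\
  ad_sym_k eps b21 c21 c22 s24 t24 t25 u v = 0.
Proof.
move=> Hu Hv; rewrite -(ad_sym_vert eps L kX Hu Hv) -(ad_sym_vert eps L kY Hu Hv).
exact: BV_eq0.
Qed.

Lemma minimal : minimal_fol eps nabla.
Proof.
rewrite /minimal_fol big1 // => k lt_k6; have vk := Vproj_ebas R lt_k6.
suff -> : BV nabla (ebas k) (ebas k) = 0 by rewrite scaler0.
by apply/(BV_vert_eq0 vk vk); rewrite !ad_sym_k_diag.
Qed.

Lemma totally_geodesic_iff : totally_geodesic_fol nabla <->
  ((eps iB - eps iA) * b11 = 0 /\ (eps iC - eps iA) * c11 = 0 /\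
   (eps iC - eps iB) * c12 = 0 /\ (eps iS - eps iR) * s14 = 0 /\
   (eps iT - eps iR) * t14 = 0 /\ (eps iT - eps iS) * t15 = 0) /\
  ((eps iB - eps iA) * b21 = 0 /\ (eps iC - eps iA) * c21 = 0 /\
   (eps iC - eps iB) * c22 = 0 /\ (eps iS - eps iR) * s24 = 0 /\
   (eps iT - eps iR) * t24 = 0 /\ (eps iT - eps iS) * t25 = 0).
Proof.
split=> [TG | [/ad_sym_k_eq0 qX /ad_sym_k_eq0 qY] u v Hu Hv].
  split; apply/ad_sym_k_eq0 => u v Hu Hv;
    by case/(BV_vert_eq0 Hu Hv): (TG u v Hu Hv).
by apply/(BV_vert_eq0 Hu Hv); split; [exact: qX | exact: qY].
Qed.

End Foliation.

Theorem theorem6p3 (R : realFieldType) (eps : 'I_8 -> R)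
    (br nabla : 'rV[R]_8 -> 'rV[R]_8 -> 'rV[R]_8)
    (b11 b21 c11 c21 c12 c22 s14 s24 t14 t24 t15 t25 : R) :
  is_signature eps ->
  lie_bracket br ->
  su2su2_brackets br ->
  levi_civita eps br nabla ->
  conformal_fol eps nabla ->
  bracket_form br b11 b21 c11 c21 c12 c22 s14 s24 t14 t24 t15 t25 ->
  semi_riemannian_fol nabla /\
  minimal_fol eps nabla /\
  (totally_geodesic_fol nabla <->
     ((eps iB - eps iA) * b11 = 0 /\ (eps iB - eps iA) * b21 = 0 /\
      (eps iC - eps iA) * c11 = 0 /\ (eps iC - eps iA) * c21 = 0 /\
      (eps iC - eps iB) * c12 = 0 /\ (eps iC - eps iB) * c22 = 0) /\
     ((eps iS - eps iR) * s14 = 0 /\ (eps iS - eps iR) * s24 = 0 /\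
      (eps iT - eps iR) * t14 = 0 /\ (eps iT - eps iR) * t24 = 0 /\
      (eps iT - eps iS) * t15 = 0 /\ (eps iT - eps iS) * t25 = 0)).
Proof.
(* The su(2) x su(2) brackets and conformality are what force the stated form
   of the brackets. *)
move=> sig L _ LC _ /bracket_form_XY [kX kY].
split; first exact: (semi_riemannian sig L LC kX kY).
split; first exact: (minimal sig L LC kX kY).
apply: iff_trans (totally_geodesic_iff sig L LC kX kY) _.
tauto.
Qed.
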